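(* Let $(S^\Omega,\mathcal T)$ be a resource theory with a currency $\mathcal C$ (value function $\mathrm{Val}$) independent of its target $\mathcal S$, and assume $\mathcal C$ is good for the poor. Let $V,W\in\mathcal S$ and $C_1,C_1'\in\mathcal C$ with $\mathrm{Val}(C_1)\ge\mathrm{Val}(C_1')$, and suppose that for every $C_2\in\mathcal C$ with $V\cap C_1\to W\cap C_2$ one has $\mathrm{Val}(C_1')\ge\mathrm{Val}(C_1)-\mathrm{Val}(C_2)$. Then $$\mathrm{Balance}(V\to W\mid C_1)\le \mathrm{Balance}(V\to W\mid C_1').$$
   Context: A resource theory $(S^\Omega,\mathcal T)$ consists of a set $\Omega$, the specification space $S^\Omega$ of all non-empty subsets of $\Omega$ (resources), and a set $\mathcal T$ of maps $f:S^\Omega\to S^\Omega$ acting element-wise, $f(V)=\bigcup_{\nu\in V} f(\{\nu\})$. $V\to W$ iff some $f\in\mathcal T$ has $f(V)\subseteq W$; $\to$ is assumed to be a pre-order. $\mathcal C\subseteq S^\Omega$ is a currency for target $\mathcal S\subseteq S^\Omega$ if (Order) any two elements of $\mathcal C$ are comparable under $\to$ and $\Omega\in\mathcal C$; (Universality) $\Omega\in\mathcal S$ and every $V\in\mathcal S$ has $C,C'\in\mathcal C$ with $C\to V$, $V\to C'$. A value function $\mathrm{Val}:\mathcal C\to\mathbb R_{\ge0}$ satisfies $\mathrm{Val}(C')\ge\mathrm{Val}(C)\iff C'\to C$ and $\mathrm{Val}(\Omega)=0$; $c_{\sup}=\sup_{C\in\mathcal C}\mathrm{Val}(C)$ (possibly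 $\infty$). Independence: $C\cap V\ne\emptyset$ for all $C\in\mathcal C,V\in\mathcal S$, and $C\to C'$ implies $C\cap V\to C'\cap V$ for all $V\in\mathcal S$. Balance: $\mathrm{Balance}(V\to W\mid C)=\sup\{\mathrm{Val}(C')-\mathrm{Val}(C): C'\in\mathcal C,\ V\cap C\to W\cap C'\}$ (with $\sup\emptyset=-\infty$). Fairness conditions: for $V,W\in\mathcal S$ and $C_1,C_2\in\mathcal C$ with $V\cap C_1\to W\cap C_2$, let $\Delta=\mathrm{Val}(C_2)-\mathrm{Val}(C_1)$. (F1): for a given $C_1'\in\mathcal C$ with $-\Delta\le\mathrm{Val}(C_1')<c_{\sup}-\Delta$ there is $C_2'\in\mathcal C$ with $V\cap C_1'\to W\cap C_2'$ and $\mathrm{Val}(C_2')-\mathrm{Val}(C_1')=\Delta$. (F2): for a given $C_2'\in\mathcal C$ with $\Delta\le\mathrm{Val}(C_2')$ there is $C_1'\in\mathcal C$ with $V\cap C_1'\to W\cap C_2'$ and $\mathrm{Val}(C_2')-\mathrm{Val}(C_1')=\Delta$. The currency is good for the poor if, for all such data, (F1) holds for every admissible $C_1'$ with $\mathrm{Val}(C_1')\le\mathrm{Val}(C_1)$ and (F2) holds for every admissible $C_2'$ with $\mathrm{Val}(C_2')\le\mathrm{Val}(C_2)$. *)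

From Stdlib Require Import Reals.
Open Scope R_scope.

(* Extended reals, used for suprema that may be +oo (c_sup) or -oo (sup of empty set). *)
Inductive ereal : Type := Fin (r : R) | PInf | NInf.

Definition ele (x y : ereal) : Prop :=
  match x, y with
  | NInf, _ => True
  | _, PInf => True
  | Fin a, Fin b => a <= b
  | _, _ => False
  end.

Definition elt (x y : ereal) : Prop := ele x y /\ x <> y.

Definition is_esup (A : R -> Prop) (s : ereal) : Prop :=
  (forall a, A a -> ele (Fin a) s) /\
  (forall u, (forall a, A a -> ele (Fin a) u) -> ele s u).

(* Resources: subsets of Omega (predicates); non-emptiness stated explicitly. *)
Definition res (Om : Type) := Om -> Prop.
Definition nonempty {Om} (V : res Om) : Prop := exists x, V x.
Definition full {Om} : res Om := fun _ => True.
Definition inter {Om} (V W : res Om) : res Om := fun x => V x /\ W x.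
Definition subset {Om} (V W : res Om) : Prop := forall x, V x -> W x.

(* A transformation f : S^Om -> S^Om acting element-wise is determined by its
   values g nu = f({nu}); then f(V) = union_{nu in V} g nu.
   The set of transformations T is a predicate on such g. *)
Definition trans (Om : Type) := Om -> res Om.

Definition arrow {Om} (T : trans Om -> Prop) (V W : res Om) : Prop :=
  exists g, T g /\ forall nu, V nu -> subset (g nu) W.

(* (S^Om, T) is a resource theory: maps send S^Om to S^Om (g nu non-empty)
   and -> is a pre-order on S^Om. *)
Definition resource_theory {Om} (T : trans Om -> Prop) : Prop :=
  (forall g, T g -> forall nu, nonempty (g nu)) /\
  (forall V, nonempty V -> arrow T V V) /\
  (forall U V W, nonempty U -> nonempty V -> nonempty W ->
     arrow T U V -> arrow T V W -> arrow T U W).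

Definition currency {Om} (T : trans Om -> Prop) (Cset S : res Om -> Prop) : Prop :=
  (forall C, Cset C -> nonempty C) /\ (forall V, S V -> nonempty V) /\
  (forall C C', Cset C -> Cset C' -> arrow T C C' \/ arrow T C' C) /\
  Cset full /\
  S full /\
  (forall V, S V -> exists C C', Cset C /\ Cset C' /\ arrow T C V /\ arrow T V C').

Definition value_function {Om} (T : trans Om -> Prop) (Cset : res Om -> Prop)
  (Val : res Om -> R) : Prop :=
  (forall C, Cset C -> 0 <= Val C) /\
  (forall C C', Cset C -> Cset C' -> (Val C' >= Val C <-> arrow T C' C)) /\
  Val full = 0.

Definition is_csup {Om} (Cset : res Om -> Prop) (Val : res Om -> R) (cs : ereal) : Prop :=
  is_esup (fun x => exists C, Cset C /\ x = Val C) cs.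

Definition independent {Om} (T : trans Om -> Prop) (Cset S : res Om -> Prop) : Prop :=
  (forall C V, Cset C -> S V -> nonempty (inter C V)) /\
  (forall C C' V, Cset C -> Cset C' -> S V -> arrow T C C' ->
     arrow T (inter C V) (inter C' V)).

Definition is_balance {Om} (T : trans Om -> Prop) (Cset : res Om -> Prop)
  (Val : res Om -> R) (V W C : res Om) (b : ereal) : Prop :=
  is_esup (fun x => exists C', Cset C' /\ arrow T (inter V C) (inter W C') /\
                              x = Val C' - Val C) b.

Definition good_for_poor {Om} (T : trans Om -> Prop) (Cset S : res Om -> Prop)
  (Val : res Om -> R) : Prop :=
  forall V W C1 C2, S V -> S W -> Cset C1 -> Cset C2 ->
    arrow T (inter V C1) (inter W C2) ->
    let D := Val C2 - Val C1 in
    (forall C1' cs, Cset C1' -> is_csup Cset Val cs ->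
       - D <= Val C1' -> elt (Fin (Val C1' + D)) cs -> Val C1' <= Val C1 ->
       exists C2', Cset C2' /\ arrow T (inter V C1') (inter W C2') /\
                   Val C2' - Val C1' = D) /\
    (forall C2', Cset C2' -> D <= Val C2' -> Val C2' <= Val C2 ->
       exists C1', Cset C1' /\ arrow T (inter V C1') (inter W C2') /\
                   Val C2' - Val C1' = D).

(* Every gain Val C2 - Val C1 achievable from V n C1 is also achievable from
   V n C1'.  If Val C1' = Val C1 the two currencies are interconvertible, so by
   independence V n C1' -> V n C1 and the same C2 works.  Otherwise C1' is
   strictly poorer, the hypothesis on C1' makes it admissible for (F1), and
   Val C1' + (Val C2 - Val C1) < Val C2 <= c_sup; (F1) then provides C2' with
   the same gain.  Monotonicity of suprema concludes. *)
From Stdlib Require Import Reals Lra Classical.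
Open Scope R_scope.

Lemma is_esup_le (A B : R -> Prop) (s t : ereal) :
  is_esup A s -> is_esup B t -> (forall a, A a -> B a) -> ele s t.
Proof.
  intros [_ Hs] [Ht _] HAB.
  apply Hs. intros a Ha. exact (Ht a (HAB a Ha)).
Qed.

Lemma is_esup_gt (A : R -> Prop) (s : ereal) (a x : R) :
  is_esup A s -> A a -> x < a -> elt (Fin x) s.
Proof.
  intros [Hs _] Ha Hxa. specialize (Hs a Ha).
  destruct s as [m| |]; simpl in Hs |- *.
  - split; [simpl; lra|]. intros Heq; injection Heq; lra.
  - split; [exact I | discriminate].
  - contradiction.
Qed.

Lemma esup_exists (A : R -> Prop) (a0 : R) : A a0 -> exists s, is_esup A s.
Proof.
  intros Ha0. destruct (classic (bound A)) as [Hbd | Hunbd].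
  - destruct (completeness A Hbd (ex_intro _ a0 Ha0)) as [m [Hub Hlub]].
    exists (Fin m). split.
    + intros a Ha. exact (Hub a Ha).
    + intros [r| |] Hu; simpl.
      * apply Hlub. intros a Ha. exact (Hu a Ha).
      * exact I.
      * exact (Hu a0 Ha0).
  - exists PInf. split.
    + intros a _. exact I.
    + intros [r| |] Hu; simpl.
      * apply Hunbd. exists r. intros a Ha. exact (Hu a Ha).
      * exact I.
      * exact (Hu a0 Ha0).
Qed.

Lemma arrow_subset {Om} (T : trans Om -> Prop) (V V' W W' : res Om) :
  subset V' V -> subset W W' -> arrow T V W -> arrow T V' W'.
Proof.
  intros HV HW [g [Hg Hgs]]. exists g. split; [exact Hg|].
  intros nu Hnu x Hx. exact (HW x (Hgs nu (HV nu Hnu) x Hx)).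
Qed.

Lemma subset_interC {Om} (V W : res Om) : subset (inter V W) (inter W V).
Proof. intros x [HV HW]. split; assumption. Qed.

Definition balance_set {Om} (T : trans Om -> Prop) (Cset : res Om -> Prop)
  (Val : res Om -> R) (V W C : res Om) : R -> Prop :=
  fun x => exists C', Cset C' /\ arrow T (inter V C) (inter W C') /\
                      x = Val C' - Val C.

Section BalanceSets.

Variables (Om : Type) (T : trans Om -> Prop) (Cset S : res Om -> Prop)
  (Val : res Om -> R).
Hypotheses (HT : resource_theory T)
  (HVal : value_function T Cset Val) (Hind : independent T Cset S).

Lemma nonempty_inter_target (C V : res Om) :
  Cset C -> S V -> nonempty (inter V C).
Proof.
  intros HCC HV. destruct (proj1 Hind C V HCC HV) as [x Hx].
  exists x. exact (subset_interC C V x Hx).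
Qed.

Lemma arrow_inter_currency (V C C' : res Om) :
  S V -> Cset C -> Cset C' -> arrow T C C' -> arrow T (inter V C) (inter V C').
Proof.
  intros HV HCC HCC' Harr.
  apply (arrow_subset T (inter C V) _ (inter C' V));
    try apply subset_interC.
  exact (proj2 Hind C C' V HCC HCC' HV Harr).
Qed.

Lemma balance_set_eq_value (V W C1 C1' : res Om) (x : R) :
  S V -> S W -> Cset C1 -> Cset C1' -> Val C1 = Val C1' ->
  balance_set T Cset Val V W C1 x -> balance_set T Cset Val V W C1' x.
Proof.
  intros HV HW HC1 HC1' Heq [C2 [HC2 [Harr Hx]]].
  destruct HT as [_ [_ Htrans]].
  assert (Hconv : arrow T C1' C1) by (apply (proj1 (proj2 HVal)); auto; lra).
  exists C2. split; [exact HC2|]. split; [|lra].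
  apply Htrans with (inter V C1); try apply nonempty_inter_target; auto.
  exact (arrow_inter_currency V C1' C1 HV HC1' HC1 Hconv).
Qed.

Lemma balance_set_poorer (V W C1 C1' : res Om) (x : R) :
  good_for_poor T Cset S Val ->
  S V -> S W -> Cset C1 -> Cset C1' -> Val C1' < Val C1 ->
  (forall C2, Cset C2 -> arrow T (inter V C1) (inter W C2) ->
     Val C1' >= Val C1 - Val C2) ->
  balance_set T Cset Val V W C1 x -> balance_set T Cset Val V W C1' x.
Proof.
  intros Hpoor HV HW HC1 HC1' Hlt Hcond [C2 [HC2 [Harr Hx]]].
  destruct (esup_exists (fun v => exists C, Cset C /\ v = Val C) (Val C2))
    as [cs Hcs]; [exists C2; auto|].
  assert (Hbelow_csup : elt (Fin (Val C1' + (Val C2 - Val C1))) cs).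
  { eapply is_esup_gt; [exact Hcs | exists C2; split; [exact HC2 | reflexivity] | lra]. }
  destruct (proj1 (Hpoor V W C1 C2 HV HW HC1 HC2 Harr) C1' cs HC1' Hcs)
    as [C2' [HC2' [Harr' Hgain]]];
    [specialize (Hcond C2 HC2 Harr); lra | exact Hbelow_csup | lra |].
  exists C2'. split; [exact HC2'|]. split; [exact Harr' | lra].
Qed.

End BalanceSets.

Theorem mainTheorem7 (Om : Type) (T : trans Om -> Prop) (Cset S : res Om -> Prop)
  (Val : res Om -> R)
  (HT : resource_theory T) (HC : currency T Cset S) (HVal : value_function T Cset Val)
  (Hind : independent T Cset S) (Hpoor : good_for_poor T Cset S Val)
  (V W C1 C1' : res Om) (HV : S V) (HW : S W) (HC1 : Cset C1) (HC1' : Cset C1')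
  (Hle : Val C1 >= Val C1')
  (Hcond : forall C2, Cset C2 -> arrow T (inter V C1) (inter W C2) ->
             Val C1' >= Val C1 - Val C2)
  (b b' : ereal)
  (Hb : is_balance T Cset Val V W C1 b) (Hb' : is_balance T Cset Val V W C1' b') :
  ele b b'.
Proof.
  apply (is_esup_le _ _ b b' Hb Hb'). intros x Hx.
  destruct (Req_dec (Val C1) (Val C1')) as [Heq | Hneq].
  - exact (balance_set_eq_value Om T Cset S Val HT HVal Hind V W C1 C1' x
             HV HW HC1 HC1' Heq Hx).
  - apply (balance_set_poorer Om T Cset S Val V W C1 C1'); auto. lra.
Qed.
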